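(* In the affine Schur category $\mathcal{AS}$ over a commutative ring $\Bbbk$, for all integers $a,b\ge 1$ and all $u\in\Bbbk$ the following equalities of morphisms hold: $$(X_{a,b}\otimes 1_u)\circ(1_a\otimes D_{u,b})\circ(D_{u,a}\otimes 1_b)=(1_b\otimes D_{u,a})\circ(D_{u,b}\otimes 1_a)\circ(1_u\otimes X_{a,b})\quad\text{as morphisms }(u,a,b)\to(b,a,u),$$ $$(1_u\otimes X_{a,b})\circ(U_{a,u}\otimes 1_b)\circ(1_a\otimes U_{b,u})=(U_{b,u}\otimes 1_a)\circ(1_b\otimes U_{a,u})\circ(X_{a,b}\otimes 1_u)\quad\text{as morphisms }(a,b,u)\to(u,b,a).$$
   Context: Let $\Bbbk$ be a commutative ring with $1$. The affine Schur category $\mathcal{AS}$ is the strict $\Bbbk$-linear monoidal category defined as follows. Generating objects: the integers $a\ge1$ (black strands of thickness $a$) and the elements $u\in\Bbbk$ (red strands labelled $u$); objects are finite words in these, tensor product being concatenation, written $(x_1,\dots,x_k)$ or $x_1\otimes\cdots\otimes x_k$. Generating morphisms, for $a,b\ge1$, $u\in\Bbbk$: merge $M_{a,b}:(a,b)\to(a+b)$, split $S_{a,b}:(a+b)\to(a,b)$, crossing $X_{a,b}:(a,b)\to(b,a)$, dot $\omega_a:(a)\to(a)$, traverse-up $U_{a,u}:(a,u)\to(u,a)$, traverse-down $D_{u,a}:(u,a)\to(a,u)$. Conventions: a black strand of thickness $0$ is the unit object and any merge, split or crossing involving a thickness-$0$ strand is an identity; $1_x$ is an identity. Derived morphisms: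 $\omega_{a,0}:=1_a$; $\omega_{a,r}:=M_{r,a-r}\circ(\omega_r\otimes1_{a-r})\circ S_{r,a-r}$ for $1\le r\le a$ (so $\omega_{a,a}=\omega_a$); $\omega_{a,r}:=0$ if $r<0$ or $r>a$; $S^{(a)}:(a)\to(1,\dots,1)$ and $M^{(a)}:(1,\dots,1)\to(a)$ are iterated splits/merges; $g_r(u):=\sum_{i=0}^{r}(-1)^i\big(\prod_{j=0}^{i-1}(u+j)\big)\omega_{r,r-i}\in\mathrm{End}(r)$. Defining relations, for all $a,b,c,d,r\ge1$, $u\in\Bbbk$: (R1) $M_{a+b,c}(M_{a,b}\otimes1_c)=M_{a,b+c}(1_a\otimes M_{b,c})$, $(S_{a,b}\otimes1_c)S_{a+b,c}=(1_a\otimes S_{b,c})S_{a,b+c}$; (R2) if $a+c=b+d$: $S_{b,d}M_{a,c}=\sum(M_{s,c-t}\otimes M_{a-s,t})(1_s\otimes X_{a-s,c-t}\otimes1_t)(S_{s,a-s}\otimes S_{c-t,t})$ over $0\le s\le\min(a,b)$, $0\le t\le\min(c,d)$, $t-s=d-a$; (R3) $M_{a,b}S_{a,b}=\binom{a+b}{a}1_{a+b}$; (R4) $(\omega_b\otimes1_a)X_{a,b}=\sum_{t=0}^{\min(a,b)}t!\,(M_{t,b-t}\otimes M_{a-t,t})(1_t\otimes X_{a-t,b-t}\otimes1_t)(1_t\otimes1_{a-t}\otimes\omega_{b-t}\otimes1_t)(S_{t,a-t}\otimes S_{b-t,t})$ and $X_{b,a}(\omega_b\otimes1_a)=\sum_{t=0}^{\min(a,b)}t!\,(M_{t,a-t}\otimes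 M_{b-t,t})(1_t\otimes1_{a-t}\otimes\omega_{b-t}\otimes1_t)(1_t\otimes X_{b-t,a-t}\otimes1_t)(S_{t,b-t}\otimes S_{a-t,t})$; (R5) $S_{a,b}\omega_{a+b}=(\omega_a\otimes\omega_b)S_{a,b}$, $\omega_{a+b}M_{a,b}=M_{a,b}(\omega_a\otimes\omega_b)$; (R6) $M^{(a)}(\omega_1\otimes\cdots\otimes\omega_1)S^{(a)}=a!\,\omega_a$; (R7) $D_{u,r}U_{r,u}=g_r(u)\otimes1_u$, $U_{r,u}D_{u,r}=1_u\otimes g_r(u)$; (R8) $(D_{u,b}\otimes1_a)(1_u\otimes X_{a,b})(U_{a,u}\otimes1_b)=(1_b\otimes U_{a,u})(X_{a,b}\otimes1_u)(1_a\otimes D_{u,b})+\sum_{t=1}^{\min(a,b)}t!\,(M_{t,b-t}\otimes1_u\otimes M_{a-t,t})(1_t\otimes1_{b-t}\otimes U_{a-t,u}\otimes1_t)(1_t\otimes X_{a-t,b-t}\otimes1_u\otimes1_t)(1_t\otimes1_{a-t}\otimes D_{u,b-t}\otimes1_t)(S_{t,a-t}\otimes1_u\otimes S_{b-t,t})$; (R9) $(1_u\otimes S_{b,c})U_{b+c,u}=(U_{b,u}\otimes1_c)(1_b\otimes U_{c,u})(S_{b,c}\otimes1_u)$, $(S_{a,b}\otimes1_u)D_{u,a+b}=(1_a\otimes D_{u,b})(D_{u,a}\otimes1_b)(1_u\otimes S_{a,b})$, $D_{u,b+c}(1_u\otimes M_{b,c})=(M_{b,c}\otimes1_u)(1_b\otimes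 D_{u,c})(D_{u,b}\otimes1_c)$, $U_{a+b,u}(M_{a,b}\otimes1_u)=(1_u\otimes M_{a,b})(U_{a,u}\otimes1_b)(1_a\otimes U_{b,u})$. *)

(* Morphisms are formal
   (untyped) terms with computed source/target; the hom-sets of AS are the
   well-typed terms modulo the congruence [eqm] generated by the axioms of a
   strict k-linear monoidal category and the defining relations (R1)-(R9). *)
From HB Require Import structures.
From mathcomp Require Import all_boot all_algebra.
Set Implicit Arguments. Unset Strict Implicit. Unset Printing Implicit Defensive.
Import GRing.Theory.
Local Open Scope ring_scope.

Section AffineSchur.
Variable K : comPzRingType.

(* generating objects: black strands of thickness a (a >= 1) and red strands u *)
Inductive gob : Type := Blk of nat | Red of K.

(* object word of a black strand of thickness a; thickness 0 = unit object *)
Definition blk (a : nat) : seq gob := if a is 0%N then [::] else [:: Blk a].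

Inductive mor : Type :=
  | Id of seq gob
  | Comp of mor & mor            (* Comp f g = f \circ g *)
  | Tens of mor & mor
  | Merge of nat & nat
  | Split of nat & nat
  | Cross of nat & nat
  | Dot of nat
  | Up of nat & K
  | Down of K & nat
  | Zero of seq gob & seq gob
  | Add of mor & mor
  | Scal of K & mor.

Fixpoint src (f : mor) : seq gob :=
  match f with
  | Id x => x
  | Comp f g => src g
  | Tens f g => src f ++ src g
  | Merge a b => blk a ++ blk b
  | Split a b => blk (a + b)
  | Cross a b => blk a ++ blk b
  | Dot a => blk a
  | Up a u => blk a ++ [:: Red u]
  | Down u a => [:: Red u] ++ blk a
  | Zero x _ => x
  | Add f _ => src f
  | Scal _ f => src f
  end.

Fixpoint tgt (f : mor) : seq gob :=
  match f with
  | Id x => x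
  | Comp f g => tgt f
  | Tens f g => tgt f ++ tgt g
  | Merge a b => blk (a + b)
  | Split a b => blk a ++ blk b
  | Cross a b => blk b ++ blk a
  | Dot a => blk a
  | Up a u => [:: Red u] ++ blk a
  | Down u a => blk a ++ [:: Red u]
  | Zero _ y => y
  | Add f _ => tgt f
  | Scal _ f => tgt f
  end.

Fixpoint wt (f : mor) : Prop :=
  match f with
  | Comp f g => [/\ wt f, wt g & src f = tgt g]
  | Tens f g => wt f /\ wt g
  | Add f g => [/\ wt f, wt g, src f = src g & tgt f = tgt g]
  | Scal _ f => wt f
  | _ => True
  end.

Definition idb (a : nat) : mor := Id (blk a).
Definition idr (u : K) : mor := Id [:: Red u].

Definition msum (x y : seq gob) (fs : seq mor) : mor := foldr Add (Zero x y) fs.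

Definition omega2 (a r : nat) : mor :=
  if r is 0%N then idb a
  else if (a < r)%N then Zero (blk a) (blk a)
  else Comp (Merge r (a - r)) (Comp (Tens (Dot r) (idb (a - r))) (Split r (a - r))).

Fixpoint Sfull (a : nat) : mor :=
  if a is n.+1 then Comp (Tens (idb 1) (Sfull n)) (Split 1 n) else Id [::].
Fixpoint Mfull (a : nat) : mor :=
  if a is n.+1 then Comp (Merge 1 n) (Tens (idb 1) (Mfull n)) else Id [::].
Fixpoint dots1 (a : nat) : mor :=
  if a is n.+1 then Tens (Dot 1) (dots1 n) else Id [::].

Definition gpoly (r : nat) (u : K) : mor :=
  msum (blk r) (blk r)
    [seq Scal ((-1) ^+ i * \prod_(j < i) (u + j%:R)) (omega2 r (r - i)) | i <- iota 0 r.+1].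

Definition comp3 (f g h : mor) : mor := Comp f (Comp g h).
Definition comp4 (f g h k : mor) : mor := Comp f (Comp g (Comp h k)).
Definition comp5 (f g h k l : mor) : mor := Comp f (Comp g (Comp h (Comp k l))).
Definition tens3 (f g h : mor) : mor := Tens f (Tens g h).
Definition tens4 (f g h k : mor) : mor := Tens f (Tens g (Tens h k)).

Definition R2rhs (a b c d : nat) : mor :=
  msum (blk a ++ blk c) (blk b ++ blk d)
    [seq comp3 (Tens (Merge st.1 (c - st.2)) (Merge (a - st.1) st.2))
               (tens3 (idb st.1) (Cross (a - st.1) (c - st.2)) (idb st.2))
               (Tens (Split st.1 (a - st.1)) (Split (c - st.2) st.2))
     | st <- [seq (s, t) | s <- iota 0 (minn a b).+1, t <- iota 0 (minn c d).+1]
     & (st.2 + a == d + st.1)%N].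

Definition R4rhs1 (a b : nat) : mor :=
  msum (blk a ++ blk b) (blk b ++ blk a)
    [seq Scal (t`!)%:R
       (comp4 (Tens (Merge t (b - t)) (Merge (a - t) t))
              (tens3 (idb t) (Cross (a - t) (b - t)) (idb t))
              (tens4 (idb t) (idb (a - t)) (Dot (b - t)) (idb t))
              (Tens (Split t (a - t)) (Split (b - t) t)))
     | t <- iota 0 (minn a b).+1].

Definition R4rhs2 (a b : nat) : mor :=
  msum (blk b ++ blk a) (blk a ++ blk b)
    [seq Scal (t`!)%:R
       (comp4 (Tens (Merge t (a - t)) (Merge (b - t) t))
              (tens4 (idb t) (idb (a - t)) (Dot (b - t)) (idb t))
              (tens3 (idb t) (Cross (b - t) (a - t)) (idb t))
              (Tens (Split t (b - t)) (Split (a - t) t)))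
     | t <- iota 0 (minn a b).+1].

Definition R8lhs (a b : nat) (u : K) : mor :=
  comp3 (Tens (Down u b) (idb a)) (Tens (idr u) (Cross a b)) (Tens (Up a u) (idb b)).

Definition R8rhs (a b : nat) (u : K) : mor :=
  Add (comp3 (Tens (idb b) (Up a u)) (Tens (Cross a b) (idr u)) (Tens (idb a) (Down u b)))
   (msum (blk a ++ [:: Red u] ++ blk b) (blk b ++ [:: Red u] ++ blk a)
    [seq Scal (t`!)%:R
       (comp5 (tens3 (Merge t (b - t)) (idr u) (Merge (a - t) t))
              (tens4 (idb t) (idb (b - t)) (Up (a - t) u) (idb t))
              (tens4 (idb t) (Cross (a - t) (b - t)) (idr u) (idb t))
              (tens4 (idb t) (idb (a - t)) (Down u (b - t)) (idb t))
              (tens3 (Split t (a - t)) (idr u) (Split (b - t) t)))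
     | t <- iota 1 (minn a b)]).

Reserved Notation "f =m g" (at level 70).

Inductive eqm : mor -> mor -> Prop :=
  | eqm_refl f : wt f -> f =m f
  | eqm_sym f g : f =m g -> g =m f
  | eqm_trans f g h : f =m g -> g =m h -> f =m h
  | eqm_comp f f' g g' : f =m f' -> g =m g' -> src f = tgt g -> Comp f g =m Comp f' g'
  | eqm_tens f f' g g' : f =m f' -> g =m g' -> Tens f g =m Tens f' g'
  | eqm_add f f' g g' : f =m f' -> g =m g' -> src f = src g -> tgt f = tgt g ->
      Add f g =m Add f' g'
  | eqm_scal c f f' : f =m f' -> Scal c f =m Scal c f'
  | cat_idl f : wt f -> Comp (Id (tgt f)) f =m f
  | cat_idr f : wt f -> Comp f (Id (src f)) =m f
  | cat_assoc f g h : wt f -> wt g -> wt h -> src f = tgt g -> src g = tgt h ->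
      Comp (Comp f g) h =m Comp f (Comp g h)
  | mon_id x y : Tens (Id x) (Id y) =m Id (x ++ y)
  | mon_unitl f : wt f -> Tens (Id [::]) f =m f
  | mon_unitr f : wt f -> Tens f (Id [::]) =m f
  | mon_assoc f g h : wt f -> wt g -> wt h -> Tens (Tens f g) h =m Tens f (Tens g h)
  | mon_interchange f g f' g' : wt f -> wt g -> wt f' -> wt g' ->
      src f = tgt g -> src f' = tgt g' ->
      Tens (Comp f g) (Comp f' g') =m Comp (Tens f f') (Tens g g')
  | lin_addA f g h : wt (Add f (Add g h)) -> Add f (Add g h) =m Add (Add f g) h
  | lin_addC f g : wt (Add f g) -> Add f g =m Add g f
  | lin_add0 f : wt f -> Add f (Zero (src f) (tgt f)) =m f
  | lin_scal0 f : wt f -> Scal 0 f =m Zero (src f) (tgt f)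
  | lin_scal1 f : wt f -> Scal 1 f =m f
  | lin_scalM c d f : wt f -> Scal (c * d) f =m Scal c (Scal d f)
  | lin_scalDl c d f : wt f -> Scal (c + d) f =m Add (Scal c f) (Scal d f)
  | lin_scalDr c f g : wt (Add f g) -> Scal c (Add f g) =m Add (Scal c f) (Scal c g)
  | lin_compDl f g h : wt (Comp (Add f g) h) -> Comp (Add f g) h =m Add (Comp f h) (Comp g h)
  | lin_compDr f g h : wt (Comp h (Add f g)) -> Comp h (Add f g) =m Add (Comp h f) (Comp h g)
  | lin_compZl c f g : wt (Comp f g) -> Comp (Scal c f) g =m Scal c (Comp f g)
  | lin_compZr c f g : wt (Comp f g) -> Comp f (Scal c g) =m Scal c (Comp f g)
  | lin_tensDl f g h : wt (Tens (Add f g) h) -> Tens (Add f g) h =m Add (Tens f h) (Tens g h)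
  | lin_tensDr f g h : wt (Tens h (Add f g)) -> Tens h (Add f g) =m Add (Tens h f) (Tens h g)
  | lin_tensZl c f g : wt (Tens f g) -> Tens (Scal c f) g =m Scal c (Tens f g)
  | lin_tensZr c f g : wt (Tens f g) -> Tens f (Scal c g) =m Scal c (Tens f g)
  | conv_merge0l b : Merge 0 b =m idb b
  | conv_merge0r a : Merge a 0 =m idb a
  | conv_split0l b : Split 0 b =m idb b
  | conv_split0r a : Split a 0 =m idb a
  | conv_cross0l b : Cross 0 b =m idb b
  | conv_cross0r a : Cross a 0 =m idb a
  | conv_dot0 : Dot 0 =m Id [::]
  | conv_up0 u : Up 0 u =m idr u
  | conv_down0 u : Down u 0 =m idr u
  | R1m a b c : (0 < a)%N -> (0 < b)%N -> (0 < c)%N ->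
      Comp (Merge (a + b) c) (Tens (Merge a b) (idb c)) =m
      Comp (Merge a (b + c)) (Tens (idb a) (Merge b c))
  | R1s a b c : (0 < a)%N -> (0 < b)%N -> (0 < c)%N ->
      Comp (Tens (Split a b) (idb c)) (Split (a + b) c) =m
      Comp (Tens (idb a) (Split b c)) (Split a (b + c))
  | R2 a b c d : (0 < a)%N -> (0 < b)%N -> (0 < c)%N -> (0 < d)%N -> (a + c = b + d)%N ->
      Comp (Split b d) (Merge a c) =m R2rhs a b c d
  | R3 a b : (0 < a)%N -> (0 < b)%N ->
      Comp (Merge a b) (Split a b) =m Scal ('C(a + b, a))%:R (idb (a + b))
  | R4a a b : (0 < a)%N -> (0 < b)%N ->
      Comp (Tens (Dot b) (idb a)) (Cross a b) =m R4rhs1 a b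
  | R4b a b : (0 < a)%N -> (0 < b)%N ->
      Comp (Cross b a) (Tens (Dot b) (idb a)) =m R4rhs2 a b
  | R5s a b : (0 < a)%N -> (0 < b)%N ->
      Comp (Split a b) (Dot (a + b)) =m Comp (Tens (Dot a) (Dot b)) (Split a b)
  | R5m a b : (0 < a)%N -> (0 < b)%N ->
      Comp (Dot (a + b)) (Merge a b) =m Comp (Merge a b) (Tens (Dot a) (Dot b))
  | R6 a : (0 < a)%N ->
      comp3 (Mfull a) (dots1 a) (Sfull a) =m Scal (a`!)%:R (Dot a)
  | R7a r u : (0 < r)%N -> Comp (Down u r) (Up r u) =m Tens (gpoly r u) (idr u)
  | R7b r u : (0 < r)%N -> Comp (Up r u) (Down u r) =m Tens (idr u) (gpoly r u)
  | R8 a b u : (0 < a)%N -> (0 < b)%N -> R8lhs a b u =m R8rhs a b u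
  | R9a b c u : (0 < b)%N -> (0 < c)%N ->
      Comp (Tens (idr u) (Split b c)) (Up (b + c) u) =m
      comp3 (Tens (Up b u) (idb c)) (Tens (idb b) (Up c u)) (Tens (Split b c) (idr u))
  | R9b a b u : (0 < a)%N -> (0 < b)%N ->
      Comp (Tens (Split a b) (idr u)) (Down u (a + b)) =m
      comp3 (Tens (idb a) (Down u b)) (Tens (Down u a) (idb b)) (Tens (idr u) (Split a b))
  | R9c b c u : (0 < b)%N -> (0 < c)%N ->
      Comp (Down u (b + c)) (Tens (idr u) (Merge b c)) =m
      comp3 (Tens (Merge b c) (idr u)) (Tens (idb b) (Down u c)) (Tens (Down u b) (idb c))
  | R9d a b u : (0 < a)%N -> (0 < b)%N ->
      Comp (Up (a + b) u) (Tens (Merge a b) (idr u)) =m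
      comp3 (Tens (idr u) (Merge a b)) (Tens (Up a u) (idb b)) (Tens (idb a) (Up b u))
where "f =m g" := (eqm f g).

End AffineSchur.

Arguments Id {K}. Arguments Merge {K}. Arguments Split {K}. Arguments Cross {K}.
Arguments Dot {K}. Arguments Zero {K}. Arguments idb {K}. Arguments Sfull {K}.
Arguments Mfull {K}. Arguments dots1 {K}. Arguments omega2 {K}.
Arguments R2rhs {K}. Arguments R4rhs1 {K}. Arguments R4rhs2 {K}.

From Pilot Require Import Defs.
From mathcomp Require Import all_boot all_algebra zify.
Set Implicit Arguments. Unset Strict Implicit. Unset Printing Implicit Defensive.

(* Say that a morphism f : x -> y between words of black strands slides through
   the red strand u if (f ⊗ 1_u) ∘ D_{u,x} = D_{u,y} ∘ (1_u ⊗ f), where D_{u,x}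
   crosses the red strand over the strands of x one at a time (and likewise for
   traverse-ups). Identities slide, and sliding is preserved by composition,
   tensor product and linear combinations; merges and splits slide by (R9). The
   crossing X_{a,b} slides by induction on a: by (R2), S_{b,a} M_{a,b} equals
   X_{a,b} plus a sum of composites of merges, splits and crossings X_{a-s,b-s}
   with s >= 1; S_{b,a} M_{a,b} and every extra summand slide, hence so does
   X_{a,b}. Both identities are the sliding of X_{a,b} for the word (a, b). *)

Notation "f =m g" := (eqm f g) (at level 70).

Section Congruence.
Context {K : comPzRingType}.
Implicit Types (f g : mor K) (x y : seq (gob K)) (o : bool).

(* The orientation [false] mirrors string diagrams left to right. *)
Definition otens o f g := if o then Tens f g else Tens g f.
Definition ocat o x y := if o then x ++ y else y ++ x.
Definition orev o x := if o then x else rev x.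

Lemma orev_cat o x y : orev o (x ++ y) = ocat o (orev o x) (orev o y).
Proof. by case: o; rewrite /orev /ocat ?rev_cat. Qed.

Lemma orev0 o : orev o [::] = [::] :> seq (gob K).
Proof. by case: o. Qed.

Lemma orev1 o (c : gob K) : orev o [:: c] = [:: c].
Proof. by case: o. Qed.

Lemma orevK o x : orev o (orev o x) = x.
Proof. by case: o; rewrite /orev ?revK. Qed.

Lemma eqm_compl f f' g : f =m f' -> wt g -> src f = tgt g -> Comp f g =m Comp f' g.
Proof. by move=> eqf wg fg; apply: eqm_comp => //; apply: eqm_refl. Qed.

Lemma eqm_compr f g g' : g =m g' -> wt f -> src f = tgt g -> Comp f g =m Comp f g'.
Proof. by move=> eqg wf fg; apply: eqm_comp => //; apply: eqm_refl. Qed.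

Lemma eqm_tensl f f' g : f =m f' -> wt g -> Tens f g =m Tens f' g.
Proof. by move=> eqf wg; apply: eqm_tens => //; apply: eqm_refl. Qed.

Lemma eqm_tensr f g g' : g =m g' -> wt f -> Tens f g =m Tens f g'.
Proof. by move=> eqg wf; apply: eqm_tens => //; apply: eqm_refl. Qed.

Lemma eqm_otensl o f f' g : f =m f' -> wt g -> otens o f g =m otens o f' g.
Proof. by case: o => eqf wg; [apply: eqm_tensl | apply: eqm_tensr]. Qed.

Lemma eqm_otensr o f g g' : g =m g' -> wt f -> otens o f g =m otens o f g'.
Proof. by case: o => eqg wf; [apply: eqm_tensr | apply: eqm_tensl]. Qed.

End Congruence.

Ltac typecheck :=
  repeat match goal with o : bool |- _ => destruct o end;
  unfold otens, orev, ocat in *; simpl in *;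
  repeat split; simpl;
  repeat match goal with
    | H : src ?X = _ |- context[src ?X] => rewrite H
    | H : tgt ?X = _ |- context[tgt ?X] => rewrite H
    end;
  try assumption; rewrite ?rev_cat ?rev_cons -?cats1 -?catA ?cats0 /= -?catA //.

(* [step t] is one step of an [=m]-chain: [t] locates the redex ([lcomp]/[rcomp]:
   left/right factor of a composite, [ltens]/[rtens]: of a tensor product) and
   [rule l] rewrites it by [l]; typing side conditions are left to [typecheck]. *)
Tactic Notation "step" tactic3(t) := eapply eqm_trans; [t | ].
Tactic Notation "rule" open_constr(l) := eapply l; solve [typecheck].
Tactic Notation "rule_sym" open_constr(l) := eapply eqm_sym; eapply l; solve [typecheck].
Tactic Notation "lcomp" tactic3(t) := eapply eqm_compl; [t | solve [typecheck]..].
Tactic Notation "rcomp" tactic3(t) := eapply eqm_compr; [t | solve [typecheck]..].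
Tactic Notation "ltens" tactic3(t) :=
  first [eapply eqm_otensl | eapply eqm_tensl]; [t | solve [typecheck]..].
Tactic Notation "rtens" tactic3(t) :=
  first [eapply eqm_otensr | eapply eqm_tensr]; [t | solve [typecheck]..].

Section MonoidalLinear.
Context {K : comPzRingType}.
Implicit Types (f g h : mor K) (x y z : seq (gob K)) (o : bool).

Lemma comp1m f x : wt f -> tgt f = x -> Comp (Id x) f =m f.
Proof. by move=> wf <-; apply: cat_idl. Qed.

Lemma compm1 f x : wt f -> src f = x -> Comp f (Id x) =m f.
Proof. by move=> wf <-; apply: cat_idr. Qed.

Lemma comp_idm x : Comp (Id x) (Id x) =m Id x.
Proof. exact: (cat_idl (f := Id x)). Qed.

Lemma otens_comp o f g f' g' : wt f -> wt g -> wt f' -> wt g' ->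
  src f = tgt g -> src f' = tgt g' ->
  otens o (Comp f g) (Comp f' g') =m Comp (otens o f f') (otens o g g').
Proof. by case: o => *; apply: mon_interchange. Qed.

Lemma otensA o f g h : wt f -> wt g -> wt h ->
  otens o (otens o f g) h =m otens o f (otens o g h).
Proof. by case: o => * /=; [apply: mon_assoc | apply: eqm_sym; apply: mon_assoc]. Qed.

Lemma otens_id o x y : otens o (Id x) (Id y) =m Id (ocat o x y).
Proof. by case: o; apply: mon_id. Qed.

Lemma otens1m o f : wt f -> otens o (Id [::]) f =m f.
Proof. by case: o => wf; [apply: mon_unitl | apply: mon_unitr]. Qed.

Lemma otensm1 o f : wt f -> otens o f (Id [::]) =m f.
Proof. by case: o => wf; [apply: mon_unitr | apply: mon_unitl]. Qed.

Lemma otensDl o f g h : wt (Add f g) -> wt h ->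
  otens o (Add f g) h =m Add (otens o f h) (otens o g h).
Proof. by case: o => *; [apply: lin_tensDl | apply: lin_tensDr]. Qed.

Lemma otensDr o f g h : wt (Add f g) -> wt h ->
  otens o h (Add f g) =m Add (otens o h f) (otens o h g).
Proof. by case: o => *; [apply: lin_tensDr | apply: lin_tensDl]. Qed.

Lemma otensZl o c f g : wt f -> wt g -> otens o (Scal c f) g =m Scal c (otens o f g).
Proof. by case: o => *; [apply: lin_tensZl | apply: lin_tensZr]. Qed.

Lemma otensZr o c f g : wt f -> wt g -> otens o f (Scal c g) =m Scal c (otens o f g).
Proof. by case: o => *; [apply: lin_tensZr | apply: lin_tensZl]. Qed.

Lemma addmN f : wt f -> Add f (Scal (-1) f) =m Zero (src f) (tgt f).
Proof.
move=> wf; step (apply: eqm_add (eqm_sym (lin_scal1 wf)) (eqm_refl _) _ _; typecheck).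
step (rule_sym lin_scalDl).
by rewrite GRing.subrr; apply: lin_scal0.
Qed.

Lemma addmK f g : wt f -> wt g -> src f = src g -> tgt f = tgt g ->
  Add (Add f g) (Scal (-1) g) =m f.
Proof.
move=> wf wg sfg tfg; step (rule_sym lin_addA).
step (apply: eqm_add (eqm_refl wf) (addmN wg) _ _; typecheck).
by rewrite -sfg -tfg; apply: lin_add0.
Qed.

Lemma eqm0_idem f : wt f -> f =m Add f f -> f =m Zero (src f) (tgt f).
Proof.
move=> wf ff; step (rule_sym lin_add0).
step (apply: eqm_add (eqm_refl wf) (eqm_sym (addmN wf)) _ _; typecheck).
step (rule lin_addA).
step (apply: eqm_add (eqm_sym ff) (eqm_refl _) _ _; typecheck).
exact: addmN.
Qed.

Lemma comp0m x y g : wt g -> x = tgt g -> Comp (Zero x y) g =m Zero (src g) y.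
Proof.
move=> wg xg; apply: (eqm0_idem (f := Comp _ _)); first by typecheck.
step (lcomp (rule_sym lin_add0)).
rule lin_compDl.
Qed.

Lemma compm0 x y f : wt f -> src f = y -> Comp f (Zero x y) =m Zero x (tgt f).
Proof.
move=> wf fy; apply: (eqm0_idem (f := Comp _ _)); first by typecheck.
step (rcomp (rule_sym lin_add0)).
rule lin_compDr.
Qed.

Lemma otens0m o x y g : wt g ->
  otens o (Zero x y) g =m Zero (ocat o x (src g)) (ocat o y (tgt g)).
Proof.
move=> wg; case: o; apply: (eqm0_idem (f := Tens _ _)) => //.
- step (ltens (rule_sym lin_add0)); rule lin_tensDl.
- step (rtens (rule_sym lin_add0)); rule lin_tensDr.
Qed.

Lemma otensm0 o x y f : wt f ->
  otens o f (Zero x y) =m Zero (ocat o (src f) x) (ocat o (tgt f) y).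
Proof. by case: o => wf; [apply: (otens0m false) | apply: (otens0m true)]. Qed.

Definition typed f x y := [/\ wt f, src f = x & tgt f = y].

Lemma typed_msum (T : eqType) x y (F : T -> mor K) s :
  (forall i, i \in s -> typed (F i) x y) -> typed (msum x y (map F s)) x y.
Proof.
elim: s => [|i s IHs] Fs //=.
have [wFi sFi tFi] := Fs i (mem_head _ _).
have [] := IHs (fun j js => Fs j (mem_behead (s := i :: s) js)).
by rewrite -/(msum x y _) => wS sS tS; split; rewrite //= sFi sS tFi tS.
Qed.

Lemma typed_R2rhs a b c d : (a + c = b + d)%N ->
  typed (R2rhs a b c d : mor K) (blk K a ++ blk K c) (blk K b ++ blk K d).
Proof.
move=> acbd; apply: typed_msum => -[s t].
rewrite mem_filter => /andP[/eqP tasd /allpairsP[[s' t'] [ss tt [eqs eqt]]]].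
subst s' t'; rewrite !mem_iota /= in tasd ss tt.
have sa : (s <= a)%N by lia.
have tc : (t <= c)%N by lia.
split; rewrite /= ?subnKC ?subnK -?catA //.
by congr (blk K _ ++ blk K _); lia.
Qed.

Definition R2summand a c (st : nat * nat) : mor K :=
  comp3 (Tens (Merge st.1 (c - st.2)) (Merge (a - st.1) st.2))
        (tens3 (idb st.1) (Cross (a - st.1) (c - st.2)) (idb st.2))
        (Tens (Defs.Split st.1 (a - st.1)) (Defs.Split (c - st.2) st.2)).

Lemma R2rhs_diag a b :
  exists2 L, R2rhs a b b a = Add (R2summand a b (0, 0))
               (msum (blk K a ++ blk K b) (blk K b ++ blk K a) (map (R2summand a b) L))
           & forall s t, (s, t) \in L -> t = s /\ (0 < s <= minn a b)%N.
Proof.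
eexists; first by rewrite /R2rhs /= addn0 eqxx.
move=> s t; rewrite mem_filter mem_cat => /andP[/eqP /= tasa].
case/orP=> [/mapP[t' + [es et]] | /flatten_mapP[s' +]]; rewrite mem_iota; first by lia.
by rewrite in_cons => s'_range /orP[/eqP[es et] | /mapP[t' _ [es et]]]; lia.
Qed.

Lemma R2summand00 a b : R2summand a b (0, 0) =m Cross a b.
Proof.
rewrite /R2summand /= !subn0.
step (lcomp (ltens (rule conv_merge0l))).
step (lcomp (rtens (rule conv_merge0r))).
step (lcomp (rule mon_id)).
step (rcomp (rcomp (ltens (rule conv_split0l)))).
step (rcomp (rcomp (rtens (rule conv_split0r)))).
step (rcomp (rcomp (rule mon_id))).
step (rcomp (lcomp (rule mon_unitl))).
step (rcomp (lcomp (rule mon_unitr))).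
step (rcomp (rule compm1)).
rule comp1m.
Qed.

End MonoidalLinear.

Section Sliding.
Variable (K : comPzRingType) (u : K).
Implicit Types (f g : mor K) (x y z : seq (gob K)) (o : bool).

Definition black x := all (fun c : gob K => if c is Blk a then (0 < a)%N else false) x.

(* [trav true x] is the traverse-down D_{u,x} : (u, x) -> (x, u) and its mirror
   image [trav false x] the traverse-up U_{x,u} : (x, u) -> (u, x), so each
   statement about traverses is proved once for both kinds. *)
Definition trav1 o (c : gob K) : mor K :=
  if c is Blk a then (if o then Down u a else Up a u) else Zero [::] [::].

Fixpoint otrav o (l : seq (gob K)) : mor K :=
  if l is c :: l' then
    Comp (otens o (Id [:: c]) (otrav o l')) (otens o (trav1 o c) (Id (orev o l')))
  else idr u.

Definition trav o x := otrav o (orev o x).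

Lemma black_cat x y : black (x ++ y) = black x && black y.
Proof. exact: all_cat. Qed.

Lemma black_orev o x : black (orev o x) = black x.
Proof. by case: o; rewrite /orev /black ?all_rev. Qed.

Lemma black_ocat o x y : black (ocat o x y) = black x && black y.
Proof. by case: o; rewrite /ocat black_cat // andbC. Qed.

Lemma black_blk a : black (blk K a).
Proof. by case: a. Qed.

Lemma typed_trav1 o c :
  black [:: c] -> typed (trav1 o c) (ocat o [:: Red u] [:: c]) (ocat o [:: c] [:: Red u]).
Proof. by case: c => // -[|a] //; case: o. Qed.

Lemma typed_otrav o l : black l ->
  typed (otrav o l) (ocat o [:: Red u] (orev o l)) (ocat o (orev o l) [:: Red u]).
Proof.
elim: l => [|c l IHl] /=; first by case: o.
move/andP=> [bc bl]; have [w1 s1 t1] := IHl bl.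
have bc1 : black [:: c] by rewrite /black /= bc.
have [w2 s2 t2] := typed_trav1 o bc1.
typecheck.
Qed.

Lemma typed_trav o x : black x -> typed (trav o x) (ocat o [:: Red u] x) (ocat o x [:: Red u]).
Proof.
by move=> bx; have := typed_otrav o (l := orev o x); rewrite black_orev orevK; apply.
Qed.

Lemma otrav_cat o l1 l2 : black l1 -> black l2 ->
  otrav o (l1 ++ l2) =m
  Comp (otens o (Id (orev o l1)) (otrav o l2)) (otens o (otrav o l1) (Id (orev o l2))).
Proof.
move=> + bl2; have [w2 s2 t2] := typed_otrav o bl2.
elim: l1 => [|c l1 IHl1] /=.
  rewrite orev0 => _; apply: eqm_sym.
  step (lcomp (rule otens1m)).
  step (rcomp (rule otens_id)).
  by apply: compm1; rewrite // s2.
move/andP=> [bc bl1]; have {}IHl1 := IHl1 bl1.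
have [w1 s1 t1] := typed_otrav o bl1.
have bc1 : black [:: c] by rewrite /black /= bc.
have [w3 s3 t3] := typed_trav1 o bc1.
have bl12 : black (l1 ++ l2) by rewrite black_cat bl1.
have [w4 s4 t4] := typed_otrav o bl12.
rewrite -[c :: l1]cat1s !orev_cat orev1.
step (lcomp (rtens (rule IHl1))).
step (lcomp (ltens (rule_sym comp_idm))).
step (lcomp (rule otens_comp)).
step (rule cat_assoc).
step (lcomp (rule_sym otensA)).
step (lcomp (ltens (rule otens_id))).
step (rcomp (lcomp (rule_sym otensA))).
step (rcomp (rcomp (rtens (rule_sym otens_id)))).
step (rcomp (rcomp (rule_sym otensA))).
apply: eqm_sym.
step (rcomp (rtens (rule_sym comp_idm))).
step (rcomp (rule otens_comp)).
rule eqm_refl.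
Qed.

Lemma trav_cat o x y : black x -> black y ->
  trav o (ocat o x y) =m Comp (otens o (Id x) (trav o y)) (otens o (trav o x) (Id y)).
Proof.
move=> bx by'; rewrite /trav.
have -> : orev o (ocat o x y) = orev o x ++ orev o y by case: o; rewrite /ocat /orev ?rev_cat.
by have := otrav_cat o (l1 := orev o x) (l2 := orev o y); rewrite !black_orev !orevK; apply.
Qed.

Lemma otrav1 o c : black [:: c] -> otrav o [:: c] =m trav1 o c.
Proof.
move=> bc; have [w s t] := typed_trav1 o bc; rewrite /= orev0.
step (lcomp (rule otens_id)).
step (rcomp (rule otensm1)).
rule comp1m.
Qed.

Lemma otrav2 o c1 c2 : black [:: c1; c2] ->
  otrav o [:: c1; c2] =m
  Comp (otens o (Id [:: c1]) (trav1 o c2)) (otens o (trav1 o c1) (Id [:: c2])).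
Proof.
move=> /andP[bc1 bc2]; have {}bc1 : black [:: c1] by rewrite /black /= bc1.
have [w1 s1 t1] := typed_trav1 o bc1; have [w2 s2 t2] := typed_trav1 o bc2.
have [w3 s3 t3] := typed_otrav o (l := [:: c2]) bc2.
rewrite [otrav o [:: c1; c2]]/= orev1.
lcomp (rtens (rule (otrav1 o (c := c2) bc2))).
Qed.

#[global] Arguments otrav : simpl never.

Definition slides o f x y := [/\ typed f x y, black x, black y &
  Comp (otens o f (idr u)) (trav o x) =m Comp (trav o y) (otens o (idr u) f)].

Lemma slides_eqm o f g x y : f =m g -> typed g x y -> slides o f x y -> slides o g x y.
Proof.
move=> fg [wg sg tg] [[wf sf tf] bx by' slf].
have [w1 s1 t1] := typed_trav o bx; have [w2 s2 t2] := typed_trav o by'.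
split => //.
step (lcomp (ltens (rule_sym fg))).
step (rule slf).
rcomp (rtens (rule fg)).
Qed.

Lemma slides_id o x : black x -> slides o (Id x) x x.
Proof.
move=> bx; have [w s t] := typed_trav o bx.
split => //.
step (lcomp (rule otens_id)).
step (rule comp1m).
apply: eqm_sym; step (rcomp (rule otens_id)).
rule compm1.
Qed.

Lemma slides_comp o f g x y z :
  slides o f y z -> slides o g x y -> slides o (Comp f g) x z.
Proof.
move=> [[wf sf tf] by' bz slf] [[wg sg tg] bx _ slg].
have [w1 s1 t1] := typed_trav o bx; have [w2 s2 t2] := typed_trav o by'.
have [w3 s3 t3] := typed_trav o bz.
split => //; first by typecheck.
step (lcomp (rtens (rule_sym comp_idm))).
step (lcomp (rule otens_comp)).
step (rule cat_assoc).
step (rcomp (rule slg)).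
step (rule_sym cat_assoc).
step (lcomp (rule slf)).
step (rule cat_assoc).
step (rcomp (rule_sym otens_comp)).
rcomp (ltens (rule comp_idm)).
Qed.

Lemma slides_otens o f g x y x' y' : slides o f x x' -> slides o g y y' ->
  slides o (otens o f g) (ocat o x y) (ocat o x' y').
Proof.
move=> [[wf sf tf] bx bx' slf] [[wg sg tg] by' by'' slg].
have [w1 s1 t1] := typed_trav o bx; have [w2 s2 t2] := typed_trav o bx'.
have [w3 s3 t3] := typed_trav o by'; have [w4 s4 t4] := typed_trav o by''.
have bxy : black (ocat o x y) by rewrite black_ocat bx.
have bxy' : black (ocat o x' y') by rewrite black_ocat bx'.
have [w5 s5 t5] := typed_trav o bxy; have [w6 s6 t6] := typed_trav o bxy'.
split=> //; first by typecheck.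
step (rcomp (rule trav_cat)).
step (lcomp (rule otensA)).
step (rule_sym cat_assoc).
step (lcomp (rule_sym otens_comp)).
step (lcomp (ltens (rule compm1))).
step (lcomp (rtens (rule slg))).
step (lcomp (ltens (rule_sym (comp1m (f := f) (x := x'))))).
step (lcomp (rule otens_comp)).
step (rule cat_assoc).
step (rcomp (lcomp (rule_sym otensA))).
step (rcomp (rule_sym otens_comp)).
step (rcomp (ltens (rule slf))).
step (rcomp (rtens (rule compm1))).
step (rcomp (rtens (rule_sym (comp1m (f := g) (x := y'))))).
step (rcomp (rule otens_comp)).
step (rcomp (rcomp (rule otensA))).
step (rule_sym cat_assoc).
lcomp (rule_sym trav_cat).
Qed.

Lemma slides_tens o f g x y x' y' : slides o f x x' -> slides o g y y' ->
  slides o (Tens f g) (x ++ y) (x' ++ y').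
Proof. by case: o => slf slg; [apply: (slides_otens slf slg) | apply: (slides_otens slg slf)]. Qed.

Lemma slides_add o f g x y : slides o f x y -> slides o g x y -> slides o (Add f g) x y.
Proof.
move=> [[wf sf tf] bx by' slf] [[wg sg tg] _ _ slg].
have [w1 s1 t1] := typed_trav o bx; have [w2 s2 t2] := typed_trav o by'.
split => //; first by typecheck.
step (lcomp (rule otensDl)).
step (rule lin_compDl).
step (apply: eqm_add slf slg _ _; typecheck).
step (rule_sym lin_compDr).
rcomp (rule_sym otensDr).
Qed.

Lemma slides_scal o c f x y : slides o f x y -> slides o (Scal c f) x y.
Proof.
move=> [[wf sf tf] bx by' slf].
have [w1 s1 t1] := typed_trav o bx; have [w2 s2 t2] := typed_trav o by'.
split => //.
step (lcomp (rule otensZl)).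
step (rule lin_compZl).
step (apply: eqm_scal slf).
step (rule_sym lin_compZr).
rcomp (rule_sym otensZr).
Qed.

Lemma slides_zero o x y : black x -> black y -> slides o (Zero x y) x y.
Proof.
move=> bx by'; have [w1 s1 t1] := typed_trav o bx; have [w2 s2 t2] := typed_trav o by'.
split => //.
step (lcomp (rule otens0m)).
step (rule comp0m).
apply: eqm_sym; step (rcomp (rule otensm0)).
step (rule compm0).
rewrite s1 t2; rule eqm_refl.
Qed.

Lemma slides_msum o (T : eqType) x y (F : T -> mor K) s : black x -> black y ->
  (forall i, i \in s -> slides o (F i) x y) -> slides o (msum x y (map F s)) x y.
Proof.
move=> bx by'; elim: s => [|i s IHs] slF /=; first exact: slides_zero.
apply: slides_add; first by apply: slF; rewrite mem_head.
by apply: IHs => j js; apply: slF; rewrite in_cons js orbT.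
Qed.

Lemma slides_addKl o f g x y :
  typed f x y -> slides o (Add f g) x y -> slides o g x y -> slides o f x y.
Proof.
move=> [wf sf tf] slfg slg; have [[wg sg tg] _ _ _] := slg.
apply: slides_eqm (slides_add slfg (slides_scal (-1) slg)) => //.
by apply: addmK; rewrite ?sf ?sg ?tf ?tg.
Qed.

Lemma slides_merge o a b : slides o (Merge a b) (blk K a ++ blk K b) (blk K (a + b)).
Proof.
case: a => [|a].
  apply: slides_eqm (slides_id o (black_blk b)) => //.
  exact/eqm_sym/conv_merge0l.
case: b => [|b].
  rewrite cats0 addn0; apply: slides_eqm (slides_id o (black_blk a.+1)).
    exact/eqm_sym/conv_merge0r.
  by split; rewrite //= addn0.
split => //.
case: o; rewrite /trav /=.
- step (rcomp (rule otrav2)).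
  step (rule_sym R9c).
  apply: eqm_sym; lcomp (rule otrav1).
- step (rcomp (rule otrav2)).
  step (rule_sym R9d).
  apply: eqm_sym; lcomp (rule otrav1).
Qed.

Lemma slides_split o a b : slides o (Defs.Split a b) (blk K (a + b)) (blk K a ++ blk K b).
Proof.
case: a => [|a].
  apply: slides_eqm (slides_id o (black_blk b)) => //.
  exact/eqm_sym/conv_split0l.
case: b => [|b].
  rewrite cats0 addn0; apply: slides_eqm (slides_id o (black_blk a.+1)).
    exact/eqm_sym/conv_split0r.
  by split; rewrite //= addn0.
split => //.
case: o; rewrite /trav /=.
- step (rcomp (rule otrav1)).
  step (rule R9b).
  apply: eqm_sym; step (lcomp (rule otrav2)).
  rule cat_assoc.
- step (rcomp (rule otrav1)).
  step (rule R9a).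
  apply: eqm_sym; step (lcomp (rule otrav2)).
  rule cat_assoc.
Qed.



Lemma slides_R2summand o a b s : (0 < s <= minn a b)%N ->
  slides o (Cross (a - s) (b - s))
    (blk K (a - s) ++ blk K (b - s)) (blk K (b - s) ++ blk K (a - s)) ->
  slides o (R2summand a b (s, s)) (blk K a ++ blk K b) (blk K b ++ blk K a).
Proof.
move=> /andP[_]; rewrite leq_min => /andP[sa sb] slX.
have slM := slides_tens (slides_merge o s (b - s)) (slides_merge o (a - s) s).
have slI := slides_tens (slides_id o (black_blk s)) (slides_tens slX (slides_id o (black_blk s))).
have slS := slides_tens (slides_split o s (a - s)) (slides_split o (b - s) s).
rewrite (subnKC sb) (subnK sa) -!catA in slM.
rewrite (subnKC sa) (subnK sb) -!catA in slS.
rewrite -!catA in slI.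
exact: slides_comp slM (slides_comp slI slS).
Qed.

Lemma slides_cross o a b : slides o (Cross a b) (blk K a ++ blk K b) (blk K b ++ blk K a).
Proof.
elim/ltn_ind: a b => a IHa b.
case: (posnP a) => [-> | a_gt0].
  rewrite [_ ++ blk K 0]cats0; apply: slides_eqm (slides_id o (black_blk b)).
    exact/eqm_sym/conv_cross0l.
  by split; rewrite //= cats0.
case: (posnP b) => [-> | b_gt0].
  rewrite [_ ++ blk K 0]cats0; apply: slides_eqm (slides_id o (black_blk a)).
    exact/eqm_sym/conv_cross0r.
  by split; rewrite //= cats0.
have slSM : slides o (Comp (Defs.Split b a) (Merge a b))
                   (blk K a ++ blk K b) (blk K b ++ blk K a).
  by apply: slides_comp (slides_split o b a) _; rewrite addnC; apply: slides_merge.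
have [L R2E L_diag] := R2rhs_diag (K := K) a b.
have := slides_eqm (R2 K a_gt0 b_gt0 b_gt0 a_gt0 (addnC a b)) (typed_R2rhs (addnC a b)) slSM.
rewrite R2E => slR2.
apply: slides_eqm (R2summand00 a b) _ _; first by [].
apply: slides_addKl slR2 _; first by typecheck; rewrite !subn0 addn0.
apply: slides_msum; rewrite ?black_cat ?black_blk // => -[s t] /L_diag[-> s_range].
have s_gt0 : (0 < s)%N by case/andP: s_range.
by apply: slides_R2summand s_range (IHa _ _ _); rewrite ltn_subrL s_gt0.
Qed.

End Sliding.

Theorem lemma3p4 (K : comPzRingType) (a b : nat) (u : K) :
  (0 < a)%N -> (0 < b)%N ->
  eqm (comp3 (Tens (Cross a b) (idr u)) (Tens (idb a) (Down u b)) (Tens (Down u a) (idb b)))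
      (comp3 (Tens (idb b) (Down u a)) (Tens (Down u b) (idb a)) (Tens (idr u) (Cross a b)))
  /\
  eqm (comp3 (Tens (idr u) (Cross a b)) (Tens (Up a u) (idb b)) (Tens (idb a) (Up b u)))
      (comp3 (Tens (Up b u) (idb a)) (Tens (idb b) (Up a u)) (Tens (Cross a b) (idr u))).
Proof.
case: a b => [|a] [|b] // _ _.
have [_ _ _ slD] := slides_cross u true a.+1 b.+1.
have [_ _ _ slU] := slides_cross u false a.+1 b.+1.
rewrite /trav /= in slD slU; split.
- step (rcomp (rule_sym (otrav2 u true (c1 := Blk K a.+1) (c2 := Blk K b.+1)))).
  step (rule slD).
  step (lcomp (rule otrav2)).
  rule cat_assoc.
- step (rcomp (rule_sym (otrav2 u false (c1 := Blk K b.+1) (c2 := Blk K a.+1)))).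
  step (rule slU).
  step (lcomp (rule otrav2)).
  rule cat_assoc.
Qed.
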